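(* With the matrices defined in the context, the Neumann Schur complement $S_N:=\mathbf{B}\mathbf{A_N}^{-1}\mathbf{B}^T\in\mathbb{R}^{n^2\times n^2}$ satisfies $$S_N=I_{n^2}-\mathbb{1}\mathbb{1}^T,$$ where $\mathbb{1}=h(1,\dots,1)^T\in\mathbb{R}^{n^2}$ (a unit vector). Equivalently, $S_N=\mathbf{B}\mathbf{B}^\dagger$ is the orthogonal projector onto the orthogonal complement of $\operatorname{Ker}\mathbf{B}^T=\operatorname{span}\{\mathbb{1}\}$.
   Context: Fix an integer $n\ge 2$ and set $h=1/n$. Let $I_m$ denote the $m\times m$ identity matrix and $\otimes$ the Kronecker product. Let $\mathrm{B}\in\mathbb{R}^{n\times(n-1)}$ be $\mathrm{B}=\frac1h M$, where $M_{i,i}=1$ and $M_{i+1,i}=-1$ for $1\le i\le n-1$, all other entries $0$. Define $\mathrm{B}^u_x=I_n\otimes \mathrm{B}$, $\mathrm{B}^v_y=\mathrm{B}\otimes I_n$, $\mathrm{B}^q_x=I_{n-1}\otimes\mathrm{B}$, $\mathrm{B}^q_y=\mathrm{B}\otimes I_{n-1}$. Let $\mathbf{B}=\begin{bmatrix}-\mathrm{B}^u_x & -\mathrm{B}^v_y\end{bmatrix}\in\mathbb{R}^{n^2\times 2n(n-1)}$ and $\mathbf{C}=\begin{bmatrix}-(\mathrm{B}^q_y)^T & (\mathrm{B}^q_x)^T\end{bmatrix}\in\mathbb{R}^{(n-1)^2\times 2n(n-1)}$, and let $\mathbf{A_N}=\mathbf{B}^T\mathbf{B}+\mathbf{C}^T\mathbf{C}$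 (which is invertible). The superscript $\dagger$ denotes the Moore–Penrose pseudoinverse. *)

From mathcomp Require Import all_boot all_order all_algebra.
Set Implicit Arguments. Unset Strict Implicit. Unset Printing Implicit Defensive.
Import Order.TTheory GRing.Theory Num.Theory.
Local Open Scope ring_scope.

(* Row/column index k of a Kronecker product of m1 x n1 and m2 x n2 matrices
   is decomposed (standard convention) as k = k1 * m2 + k2, k1 < m1, k2 < m2. *)
Lemma kron_hi_proof m1 m2 (i : 'I_(m1 * m2)) : (i %/ m2 < m1)%N.
Proof.
case: i => i /=; case: m2 => [|m2]; first by rewrite muln0.
by rewrite ltn_divLR.
Qed.

Lemma kron_lo_proof m1 m2 (i : 'I_(m1 * m2)) : (i %% m2 < m2)%N.
Proof.
case: i => i /=; case: m2 => [|m2]; first by rewrite muln0.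
by rewrite ltn_mod.
Qed.

Definition kron_hi m1 m2 (i : 'I_(m1 * m2)) : 'I_m1 := Ordinal (kron_hi_proof i).
Definition kron_lo m1 m2 (i : 'I_(m1 * m2)) : 'I_m2 := Ordinal (kron_lo_proof i).

Definition kron (R : pzRingType) m1 n1 m2 n2
  (A : 'M[R]_(m1, n1)) (B : 'M[R]_(m2, n2)) : 'M[R]_(m1 * m2, n1 * n2) :=
  \matrix_(i, j) (A (kron_hi i) (kron_hi j) * B (kron_lo i) (kron_lo j)).

Section Model.
Variables (R : fieldType) (n : nat).

Definition hh : R := (n%:R)^-1.

Definition Mmat : 'M[R]_(n, n.-1) :=
  \matrix_(i, j) (if (i : nat) == j then 1 else if (i : nat) == j.+1 then -1 else 0).

Definition Bmat : 'M[R]_(n, n.-1) := hh^-1 *: Mmat.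

Definition Bux : 'M[R]_(n * n, n * n.-1) := kron (1%:M : 'M[R]_n) Bmat.
Definition Bvy : 'M[R]_(n * n, n * n.-1) :=
  castmx (erefl, mulnC n.-1 n) (kron Bmat (1%:M : 'M[R]_n)).
Definition Bqx : 'M[R]_(n * n.-1, n.-1 * n.-1) :=
  castmx (mulnC n.-1 n, erefl) (kron (1%:M : 'M[R]_n.-1) Bmat).
Definition Bqy : 'M[R]_(n * n.-1, n.-1 * n.-1) := kron Bmat (1%:M : 'M[R]_n.-1).

Definition BB : 'M[R]_(n * n, n * n.-1 + n * n.-1) := row_mx (- Bux) (- Bvy).
Definition CC : 'M[R]_(n.-1 * n.-1, n * n.-1 + n * n.-1) := row_mx (- Bqy^T) (Bqx^T).

Definition AN : 'M[R]_(n * n.-1 + n * n.-1) := BB^T *m BB + CC^T *m CC.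

Definition SN : 'M[R]_(n * n) := BB *m invmx AN *m BB^T.

Definition one_vec : 'cV[R]_(n * n) := const_mx hh.

End Model.

(* Write B : faces -> cells (discrete divergence) and
   C : faces -> vertices (discrete curl).  The whole statement follows from
   three facts about the complex  cells --B^T--> faces --C--> vertices:
   (1) C B^T = 0 (curl of a gradient vanishes);
   (2) exactness at the faces: every curl-free face field is a gradient
       (discrete Poincare lemma, by integrating along grid lines);
   (3) Ker B^T is spanned by the unit vector 1 = h (1, ..., 1).
   For any such complex the Laplacian A = B^T B + C^T C is positive definite
   (its kernel is Ker B /\ Ker C, which (2) makes trivial), and
   S = B A^-1 B^T is symmetric, idempotent (by (1), C^T C commutes with A)
   and has kernel Ker B^T; hence S = I - 1 1^T. *)

From mathcomp Require Import all_boot all_order all_algebra.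
From mathcomp Require Import zify ring.
Import Order.TTheory GRing.Theory Num.Theory.
Local Open Scope ring_scope.
Set Implicit Arguments. Unset Strict Implicit. Unset Printing Implicit Defensive.

Lemma mulmx_cols0 (R : pzRingType) p q (M : 'M[R]_(p, q)) :
  (forall y : 'cV[R]_q, M *m y = 0) -> M = 0.
Proof.
move=> My0; apply/matrixP => i j.
have := My0 (delta_mx j 0); rewrite -colE => /(congr1 (fun N : 'M[R]_(p, 1) => N i 0)).
by rewrite !mxE.
Qed.

Section NormSquare.
Variable R : realFieldType.

Lemma norm2_ge0 p (z : 'cV[R]_p) : 0 <= (z^T *m z) 0 0.
Proof. by rewrite mxE; apply: sumr_ge0 => i _; rewrite mxE -expr2 sqr_ge0. Qed.

Lemma norm2_eq0 p (z : 'cV[R]_p) : (z^T *m z) 0 0 = 0 -> z = 0.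
Proof.
rewrite mxE => z2_0; apply/colP => i; rewrite mxE.
have sq_ge0 (j : 'I_p) : true -> 0 <= z^T 0 j * z j 0.
  by move=> _; rewrite mxE -expr2 sqr_ge0.
have := @psumr_eq0P _ _ xpredT _ sq_ge0 z2_0 i isT.
by rewrite mxE => /eqP; rewrite mulf_eq0 orbb => /eqP.
Qed.

End NormSquare.

Section HodgeLaplacian.
Variables (R : realFieldType) (p q r : nat).
Variables (B : 'M[R]_(p, q)) (C : 'M[R]_(r, q)).

Definition laplacian : 'M[R]_q := B^T *m B + C^T *m C.
Definition schur : 'M[R]_p := B *m invmx laplacian *m B^T.

Lemma laplacian_tr : laplacian^T = laplacian.
Proof. by rewrite /laplacian linearD /= !trmx_mul !trmxK. Qed.

Lemma schur_tr : schur^T = schur.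
Proof. by rewrite /schur !trmx_mul trmxK trmx_inv laplacian_tr mulmxA. Qed.

(* The quadratic form of the Laplacian is |Bx|^2 + |Cx|^2. *)
Lemma laplacian_form0 (x : 'cV[R]_q) :
  (x^T *m (laplacian *m x)) 0 0 = 0 -> B *m x = 0 /\ C *m x = 0.
Proof.
have -> : x^T *m (laplacian *m x) = (B *m x)^T *m (B *m x) + (C *m x)^T *m (C *m x).
  by rewrite /laplacian mulmxDl mulmxDr !trmx_mul !mulmxA.
rewrite mxE => /eqP; rewrite paddr_eq0 ?norm2_ge0 // => /andP [/eqP Bx0 /eqP Cx0].
by split; apply: norm2_eq0.
Qed.

(* If Ker C is the range of B^T, then Ker B and Ker C meet trivially:
   x = B^T phi and B x = 0 force |x|^2 = phi^T B x = 0. *)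
Lemma exact_kernels_trivial :
  (forall x : 'cV[R]_q, C *m x = 0 -> exists phi : 'cV[R]_p, x = B^T *m phi) ->
  forall x : 'cV[R]_q, B *m x = 0 -> C *m x = 0 -> x = 0.
Proof.
move=> exactness x Bx0 /exactness [phi xE]; apply: norm2_eq0.
by rewrite [in X in X *m _]xE trmx_mul trmxK -mulmxA Bx0 mulmx0 mxE.
Qed.

Hypothesis kernels_trivial : forall x : 'cV[R]_q, B *m x = 0 -> C *m x = 0 -> x = 0.

Lemma laplacian_definite (x : 'cV[R]_q) : (x^T *m (laplacian *m x)) 0 0 = 0 -> x = 0.
Proof. by case/laplacian_form0; apply: kernels_trivial. Qed.

Lemma laplacian_unit : laplacian \in unitmx.
Proof.
rewrite unitmxE unitfE; apply/negP => /det0P [w w_neq0 wA0].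
suff : w^T = 0 by move/(congr1 trmx); rewrite trmxK trmx0 => w0; rewrite w0 eqxx in w_neq0.
apply: laplacian_definite.
by rewrite -[laplacian]laplacian_tr -trmx_mul wA0 trmx0 mulmx0 mxE.
Qed.

(* The Schur complement is positive semidefinite with kernel Ker B^T:
   y^T S y is the A^-1-norm of B^T y. *)
Lemma schur_ker (y : 'cV[R]_p) : schur *m y = 0 -> B^T *m y = 0.
Proof.
move=> Sy0; set w := invmx laplacian *m (B^T *m y).
have Aw : laplacian *m w = B^T *m y by rewrite /w mulKVmx ?laplacian_unit.
suff w0 : w = 0 by rewrite -Aw w0 mulmx0.
apply: laplacian_definite; rewrite Aw.
have -> : w^T = y^T *m B *m invmx laplacian.
  by rewrite /w !trmx_mul trmxK trmx_inv laplacian_tr.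
have -> : y^T *m B *m invmx laplacian *m (B^T *m y) = y^T *m (schur *m y).
  by rewrite /schur !mulmxA.
by rewrite Sy0 mulmx0 mxE.
Qed.

Hypothesis complex : C *m B^T = 0.

(* When C B^T = 0, the two halves of the Laplacian annihilate each other,
   so C^T C commutes with the Laplacian and hence with its inverse. *)
Lemma laplacian_inv_commute :
  invmx laplacian *m (C^T *m C) = C^T *m C *m invmx laplacian.
Proof.
have BCt : B *m C^T = 0 by rewrite -[B]trmxK -trmx_mul complex trmx0.
have commute : C^T *m C *m laplacian = laplacian *m (C^T *m C).
  rewrite /laplacian mulmxDr mulmxDl.
  by rewrite !mulmxA -(mulmxA _ C) -(mulmxA _ B) complex BCt !mulmx0 !mul0mx.
have Au := laplacian_unit.
transitivity (invmx laplacian *m (C^T *m C *m laplacian) *m invmx laplacian).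
  by rewrite -!mulmxA (mulmxV Au) mulmx1.
by rewrite commute !mulmxA (mulVmx Au) mul1mx.
Qed.

Lemma schur_idem : schur *m schur = schur.
Proof.
have Au := laplacian_unit.
have BtB : B^T *m B = laplacian - C^T *m C by rewrite /laplacian addrK.
have CCAB : C^T *m (C *m (invmx laplacian *m B^T)) = 0.
  by rewrite !mulmxA -laplacian_inv_commute -!mulmxA complex !mulmx0.
rewrite /schur.
transitivity (B *m invmx laplacian *m (B^T *m B) *m invmx laplacian *m B^T).
  by rewrite !mulmxA.
rewrite BtB mulmxBr !mulmxBl -!mulmxA (mulKmx Au).
by rewrite CCAB !mulmx0 subr0.
Qed.

End HodgeLaplacian.

Section RankOneProjector.
Variables (R : fieldType) (p : nat) (S : 'M[R]_p) (e : 'cV[R]_p).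
Hypotheses (S_idem : S *m S = S) (S_sym : S^T = S) (Se0 : S *m e = 0).
Hypotheses (e_unit : e^T *m e = 1%:M).
Hypothesis kerS : forall y : 'cV[R]_p, S *m y = 0 -> exists a, y = a *: e.

(* A symmetric idempotent whose kernel is the line through the unit vector e
   is the orthogonal projector I - e e^T: for every y, y - S y lies in Ker S,
   so it is a multiple of e, namely its component e e^T y. *)
Lemma projector_rank_one : S = 1%:M - e *m e^T.
Proof.
apply/eqP; rewrite -subr_eq0; apply/eqP; apply: mulmx_cols0 => y.
set z := y - S *m y.
have [a zE] : exists a, z = a *: e by apply: kerS; rewrite mulmxBr mulmxA S_idem subrr.
have eS0 : e^T *m S = 0 by rewrite -S_sym -trmx_mul Se0 trmx0.
have ez : e^T *m z = e^T *m y by rewrite /z mulmxBr mulmxA eS0 mul0mx subr0.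
have zP : e *m (e^T *m y) = z by rewrite -ez zE -!scalemxAr e_unit mulmx1.
by rewrite mulmxBl !mulmxBl mul1mx -mulmxA zP /z subKr subrr.
Qed.

End RankOneProjector.

Theorem schur_complement_projector (R : realFieldType) p q r
    (B : 'M[R]_(p, q)) (C : 'M[R]_(r, q)) (e : 'cV[R]_p) :
  C *m B^T = 0 ->
  (forall x : 'cV[R]_q, C *m x = 0 -> exists phi : 'cV[R]_p, x = B^T *m phi) ->
  B^T *m e = 0 -> e^T *m e = 1%:M ->
  (forall y : 'cV[R]_p, B^T *m y = 0 -> exists a, y = a *: e) ->
  laplacian B C \in unitmx /\ schur B C = 1%:M - e *m e^T.
Proof.
move=> complex exactness Bte e_unit kerBt.
have ker0 := exact_kernels_trivial exactness.
split; first exact: laplacian_unit.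
apply: projector_rank_one => //.
- exact: schur_idem.
- exact: schur_tr.
- by rewrite /schur -!mulmxA Bte !mulmx0.
- by move=> y /(schur_ker ker0) /kerBt.
Qed.

Lemma mixed_radixK a b w : (b < w)%N -> ((a * w + b) %/ w = a)%N /\ ((a * w + b) %% w = b)%N.
Proof.
move=> bw; have w0 : (0 < w)%N by apply: leq_ltn_trans bw.
by rewrite divnMDl // divn_small // addn0 modnMDl modn_small.
Qed.

Lemma mixed_radix_lt a b v w : (a < v)%N -> (b < w)%N -> (a * w + b < v * w)%N.
Proof.
move=> av bw; apply: (@leq_trans (a * w + w)); first by rewrite ltn_add2l.
by rewrite -mulSnr leq_mul2r av orbT.
Qed.

Section NatIndexing.
Variable R : pzRingType.

(* Entries of column vectors and matrices read at natural-number indices,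
   with value 0 out of range; this lets index arithmetic be done in nat. *)
Definition entry p (z : 'cV[R]_p) (k : nat) : R :=
  if (insub k : option 'I_p) is Some i then z i 0 else 0.

Definition mentry r c (A : 'M[R]_(r, c)) (i j : nat) : R :=
  match (insub i : option 'I_r), (insub j : option 'I_c) with
  | Some i', Some j' => A i' j'
  | _, _ => 0
  end.

Lemma entryE p (z : 'cV[R]_p) (i : 'I_p) : entry z i = z i 0.
Proof. by rewrite /entry valK. Qed.

Lemma entryO p (z : 'cV[R]_p) k (kp : (k < p)%N) : entry z k = z (Ordinal kp) 0.
Proof. by rewrite /entry insubT. Qed.

Lemma mentryE r c (A : 'M[R]_(r, c)) (i : 'I_r) (j : 'I_c) : mentry A i j = A i j.
Proof. by rewrite /mentry !valK. Qed.

Lemma mentryO r c (A : 'M[R]_(r, c)) i j (ir : (i < r)%N) (jc : (j < c)%N) :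
  mentry A i j = A (Ordinal ir) (Ordinal jc).
Proof. by rewrite /mentry !insubT. Qed.

Lemma mentry_tr r c (A : 'M[R]_(r, c)) i j : mentry A^T i j = mentry A j i.
Proof.
rewrite /mentry; case: (insub i) => [x|]; case: (insub j) => [y|] //.
by rewrite mxE.
Qed.

Lemma mentry1 r i j : (i < r)%N -> (j < r)%N -> mentry (1%:M : 'M[R]_r) i j = (i == j)%:R.
Proof. by move=> ir jr; rewrite mentryO !mxE. Qed.

Lemma entry0 p k : entry (0 : 'cV[R]_p) k = 0.
Proof. by rewrite /entry; case: insub => // i; rewrite mxE. Qed.

Lemma entryN p (z : 'cV[R]_p) k : entry (- z) k = - entry z k.
Proof. by rewrite /entry; case: insub => [i|]; rewrite ?mxE ?oppr0. Qed.

Lemma entryZ p a (z : 'cV[R]_p) k : entry (a *: z) k = a * entry z k.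
Proof. by rewrite /entry; case: insub => [i|]; rewrite ?mxE ?mulr0. Qed.

Lemma entry_const p a k : (k < p)%N -> entry (const_mx a : 'cV[R]_p) k = a.
Proof. by move=> kp; rewrite (entryO _ kp) mxE. Qed.

Lemma entry_cast p q (e : p = q) (z : 'cV[R]_p) k : entry (castmx (e, erefl) z) k = entry z k.
Proof. by case: q / e. Qed.

Definition grid p (z : 'cV[R]_p) (w a b : nat) : R := entry z (a * w + b).

Lemma grid_eq N v w (e : N = (v * w)%N) (z1 z2 : 'cV[R]_N) :
  (forall a b, (a < v)%N -> (b < w)%N -> grid z1 w a b = grid z2 w a b) -> z1 = z2.
Proof.
subst N => z12; apply/colP => k; rewrite -!entryE.
have w0 : (0 < w)%N.
  by have := ltn_ord k; case: (posnP w) => [w0|//]; rewrite {2}w0 muln0.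
by rewrite (divn_eq k w); apply: z12; rewrite ?ltn_mod // ltn_divLR.
Qed.

Lemma sum_mixed_radix v w (F : nat -> R) :
  \sum_(l < v * w) F l = \sum_(a < v) \sum_(b < w) F (a * w + b)%N.
Proof.
elim: v => [|v IH]; first by rewrite mul0n !big_ord0.
rewrite big_ord_recr /= -IH mulSnr.
rewrite -(big_mkord xpredT) (big_cat_nat _ (n := v * w)) //= ?leq_addr // big_mkord.
congr (_ + _); rewrite -{1}[(v * w)%N]add0n big_addn addKn big_mkord.
by apply: eq_bigr => i _; rewrite addnC.
Qed.

Lemma sum_delta m (t : nat) (g : nat -> R) :
  \sum_(k < m) (t == k :> nat)%:R * g k = if (t < m)%N then g t else 0.
Proof.
case: ifP => tm.
  rewrite (bigD1 (Ordinal tm)) //= eqxx mul1r big1 ?addr0 // => i ti.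
  by case: eqP => [e|]; [case/eqP: ti; apply: val_inj | rewrite mul0r].
rewrite big1 // => i _; case: eqP => [e|]; last by rewrite mul0r.
by move: tm; rewrite e ltn_ord.
Qed.

Lemma castmx_mull p q r (e : p = q) (K : 'M[R]_(p, r)) (z : 'cV[R]_r) :
  castmx (e, erefl) K *m z = castmx (e, erefl) (K *m z).
Proof. by case: q / e. Qed.

Lemma castmx_mulr p q r (e : p = q) (K : 'M[R]_(r, p)) (z : 'cV[R]_q) :
  castmx (erefl, e) K *m z = K *m castmx (esym e, erefl) z.
Proof. by case: q / e in z *. Qed.

Lemma kron_tr m1 n1 m2 n2 (A : 'M[R]_(m1, n1)) (B : 'M[R]_(m2, n2)) :
  (kron A B)^T = kron A^T B^T.
Proof. by apply/matrixP => i j; rewrite !mxE. Qed.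

Lemma kron_mulE m1 n1 m2 n2 (A : 'M[R]_(m1, n1)) (B : 'M[R]_(m2, n2))
    (z : 'cV[R]_(n1 * n2)) a b : (a < m1)%N -> (b < m2)%N ->
  entry (kron A B *m z) (a * m2 + b) =
  \sum_(i < n1) \sum_(j < n2) mentry A a i * mentry B b j * entry z (i * n2 + j).
Proof.
move=> am1 bm2; rewrite (entryO _ (mixed_radix_lt am1 bm2)) mxE.
rewrite (eq_bigr (fun l : 'I_(n1 * n2) =>
   mentry A a (l %/ n2) * mentry B b (l %% n2) * entry z l)); last first.
  move=> l _; rewrite mxE entryE -!mentryE /=.
  by have [-> ->] := mixed_radixK a bm2.
rewrite (sum_mixed_radix n1 n2 (fun l => mentry A a (l %/ n2) * mentry B b (l %% n2) * entry z l)).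
apply: eq_bigr => i _; apply: eq_bigr => j _.
by have [-> ->] := mixed_radixK i (ltn_ord j).
Qed.

Lemma kron1_mulE m1 m2 n2 (A : 'M[R]_(m2, n2)) (z : 'cV[R]_(m1 * n2)) a b :
  (a < m1)%N -> (b < m2)%N ->
  entry (kron (1%:M : 'M[R]_m1) A *m z) (a * m2 + b) =
  \sum_(j < n2) mentry A b j * entry z (a * n2 + j).
Proof.
move=> am1 bm2; rewrite kron_mulE //.
rewrite (eq_bigr (fun i : 'I_m1 => (a == i :> nat)%:R *
   \sum_(j < n2) mentry A b j * entry z (i * n2 + j))); last first.
  move=> i _; rewrite mulr_sumr; apply: eq_bigr => j _.
  by rewrite mentry1 // mulrA.
by rewrite (sum_delta m1 a (fun i => \sum_(j < n2) mentry A b j * entry z (i * n2 + j))) am1.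
Qed.

Lemma kronr1_mulE m1 n1 m2 (A : 'M[R]_(m1, n1)) (z : 'cV[R]_(n1 * m2)) a b :
  (a < m1)%N -> (b < m2)%N ->
  entry (kron A (1%:M : 'M[R]_m2) *m z) (a * m2 + b) =
  \sum_(i < n1) mentry A a i * entry z (i * m2 + b).
Proof.
move=> am1 bm2; rewrite kron_mulE //; apply: eq_bigr => i _.
rewrite (eq_bigr (fun j : 'I_m2 => mentry A a i * ((b == j :> nat)%:R * entry z (i * m2 + j)))).
  by rewrite -mulr_sumr (sum_delta m2 b (fun j => entry z (i * m2 + j))) bm2.
by move=> j _; rewrite mentry1 // mulrA.
Qed.

End NatIndexing.

Section StaggeredGrid.
Variables (R : numFieldType) (m : nat).
Local Notation n := m.+1.
Local Notation c := (hh R n)^-1.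
Local Notation Bm := (Bmat R n).

Lemma inv_mesh_neq0 : c != 0.
Proof. by rewrite invr_eq0 /hh invr_eq0 pnatr_eq0. Qed.

Lemma Bmat_entry k j : (k < n)%N -> (j < m)%N ->
  mentry Bm k j = c * ((j == k :> nat)%:R - (j.+1 == k :> nat)%:R).
Proof.
move=> kn jm; rewrite (mentryO _ kn jm) !mxE /= [(j == k)%N]eq_sym [(j.+1 == k)%N]eq_sym.
case: (k =P j) => e1; case: (k =P j.+1) => e2 //=; first lia.
- by rewrite subr0.
- by rewrite sub0r.
- by rewrite subr0.
Qed.

Lemma Bmat_tr_apply j (g : nat -> R) : (j < m)%N ->
  \sum_(k < n) mentry Bm^T j k * g k = c * (g j - g j.+1).
Proof.
move=> jm; rewrite (eq_bigr (fun k : 'I_n =>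
  c * ((j == k :> nat)%:R * g k - (j.+1 == k :> nat)%:R * g k))); last first.
  by move=> k _; rewrite mentry_tr Bmat_entry // -mulrA mulrBl.
rewrite -mulr_sumr sumrB !sum_delta.
by have [-> ->] : (j < n)%N /\ (j.+1 < n)%N by lia.
Qed.

(* The transposed blocks, read on the staggered grids: (B_x^u)^T and (B_y^v)^T
   take forward differences of cell values (n x n grid) along rows and columns,
   giving face values (n x m and m x n grids); (B_y^q)^T and (B_x^q)^T take
   forward differences of face values, giving vertex values (m x m grid). *)
Lemma Bux_tr_grid (y : 'cV[R]_(n * n)) a j : (a < n)%N -> (j < m)%N ->
  grid ((Bux R n)^T *m y) m a j = c * (grid y n a j - grid y n a j.+1).
Proof.
move=> an jm; rewrite /grid /Bux kron_tr trmx1 kron1_mulE //.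
exact: (Bmat_tr_apply (fun k => entry y (a * n + k))).
Qed.

Lemma Bvy_tr_grid (y : 'cV[R]_(n * n)) i b : (i < m)%N -> (b < n)%N ->
  grid ((Bvy R n)^T *m y) n i b = c * (grid y n i b - grid y n i.+1 b).
Proof.
move=> im bn; rewrite /grid /Bvy trmx_cast /= castmx_mull entry_cast.
rewrite kron_tr trmx1 kronr1_mulE //.
exact: (Bmat_tr_apply (fun k => entry y (k * n + b))).
Qed.

Lemma Bqy_tr_grid (u : 'cV[R]_(n * m)) i j : (i < m)%N -> (j < m)%N ->
  grid ((Bqy R n)^T *m u) m i j = c * (grid u m i j - grid u m i.+1 j).
Proof.
move=> im jm; rewrite /grid /Bqy kron_tr trmx1 kronr1_mulE //.
exact: (Bmat_tr_apply (fun k => entry u (k * m + j))).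
Qed.

Lemma Bqx_tr_grid (v : 'cV[R]_(n * m)) i j : (i < m)%N -> (j < m)%N ->
  grid ((Bqx R n)^T *m v) m i j = c * (grid v n i j - grid v n i j.+1).
Proof.
move=> im jm; rewrite /grid /Bqx trmx_cast /= castmx_mulr kron_tr trmx1 kron1_mulE //.
under eq_bigr => k _ do rewrite entry_cast.
exact: (Bmat_tr_apply (fun k => entry v (i * n + k))).
Qed.

Lemma BB_tr_mul (y : 'cV[R]_(n * n)) :
  (BB R n)^T *m y = col_mx (- ((Bux R n)^T *m y)) (- ((Bvy R n)^T *m y)).
Proof. by rewrite /BB tr_row_mx mul_col_mx !linearN /= !mulNmx. Qed.

Lemma CC_mul (u v : 'cV[R]_(n * m)) :
  CC R n *m col_mx u v = - ((Bqy R n)^T *m u) + (Bqx R n)^T *m v.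
Proof. by rewrite /CC mul_row_col !mulNmx. Qed.

Lemma curl_grad : CC R n *m (BB R n)^T = 0.
Proof.
apply: mulmx_cols0 => y; rewrite -mulmxA BB_tr_mul CC_mul !mulmxN opprK.
apply/eqP; rewrite addr_eq0 opprK; apply/eqP.
apply: (grid_eq (erefl _)) => i j im jm.
rewrite Bqy_tr_grid // Bqx_tr_grid // !Bux_tr_grid ?Bvy_tr_grid //; try lia.
ring.
Qed.

Lemma grad_one : (BB R n)^T *m one_vec R n = 0.
Proof.
have one_grid w a b : (a * w + b < n * n)%N -> grid (one_vec R n) w a b = hh R n.
  by move=> lt; rewrite /grid entry_const.
rewrite BB_tr_mul; apply/eqP; rewrite col_mx_eq0 !oppr_eq0; apply/andP; split; apply/eqP.
  apply: (grid_eq (erefl _)) => a j an jm.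
  by rewrite Bux_tr_grid // !one_grid ?subrr ?mulr0 /grid ?entry0 //; apply: mixed_radix_lt; lia.
apply: (grid_eq (mulnC _ _)) => i b im bn.
by rewrite Bvy_tr_grid // !one_grid ?subrr ?mulr0 /grid ?entry0 //; apply: mixed_radix_lt; lia.
Qed.

Lemma grad_ker_const (y : 'cV[R]_(n * n)) : (BB R n)^T *m y = 0 ->
  forall a b, (a < n)%N -> (b < n)%N -> grid y n a b = grid y n 0 0.
Proof.
rewrite BB_tr_mul => /eqP; rewrite col_mx_eq0 !oppr_eq0 => /andP [/eqP Dx /eqP Dy].
have zero_diff (d : R) : 0 = c * d -> d = 0.
  by move/esym/eqP; rewrite mulf_eq0 (negbTE inv_mesh_neq0) => /eqP.
have step_x a j : (a < n)%N -> (j < m)%N -> grid y n a j.+1 = grid y n a j.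
  move=> an jm; have := Bux_tr_grid y an jm.
  by rewrite Dx /grid entry0 => /zero_diff /eqP; rewrite subr_eq0 => /eqP.
have step_y i b : (i < m)%N -> (b < n)%N -> grid y n i.+1 b = grid y n i b.
  move=> im bn; have := Bvy_tr_grid y im bn.
  by rewrite Dy /grid entry0 => /zero_diff /eqP; rewrite subr_eq0 => /eqP.
move=> a b; elim: b => [|b IHb] an bn.
  by elim: a an => [|a IHa] an //; rewrite step_y ?IHa //; lia.
by rewrite step_x ?IHb //; lia.
Qed.

Lemma grad_ker (y : 'cV[R]_(n * n)) :
  (BB R n)^T *m y = 0 -> exists a, y = a *: one_vec R n.
Proof.
move=> Dy; exists (grid y n 0 0 * n%:R); apply: (grid_eq (erefl _)) => a b an bn.
rewrite (grad_ker_const Dy) // /grid entryZ entry_const ?mixed_radix_lt //.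
by rewrite /hh mulfK // pnatr_eq0.
Qed.

Lemma one_vec_unit : (one_vec R n)^T *m one_vec R n = 1%:M.
Proof.
apply/matrixP => i j; rewrite !ord1 !mxE.
rewrite (eq_bigr (fun _ => hh R n * hh R n)); last by move=> k _; rewrite !mxE.
rewrite sumr_const card_ord -[_ *+ (n * n)]mulr_natr natrM eqxx /hh /=.
have n0 : n%:R != 0 :> R by rewrite pnatr_eq0.
by rewrite mulrACA mulVf // mulr1.
Qed.

(* A curl-free face field x = (u, v) is the gradient
   of the potential phi(a, b) = sum_(i < a) v(i, 0) + sum_(j < b) u(a, j),
   obtained by integrating along the first column and then along rows. *)
Definition potential (u v : 'cV[R]_(n * m)) : 'cV[R]_(n * n) :=
  \col_(k < n * n) (\sum_(i < k %/ n) grid v n i 0 + \sum_(j < k %% n) grid u m (k %/ n) j).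

Lemma potential_grid u v a b : (a < n)%N -> (b < n)%N ->
  grid (potential u v) n a b = \sum_(i < a) grid v n i 0 + \sum_(j < b) grid u m a j.
Proof.
move=> an bn; rewrite /grid (entryO _ (mixed_radix_lt an bn)) mxE /=.
by have [-> ->] := mixed_radixK a bn.
Qed.

Lemma curl_free_grid u v : CC R n *m col_mx u v = 0 ->
  forall i j, (i < m)%N -> (j < m)%N ->
  grid u m i.+1 j - grid u m i j = grid v n i j.+1 - grid v n i j.
Proof.
rewrite CC_mul => /eqP; rewrite addrC subr_eq0 => /eqP curl0 i j im jm.
have := congr1 (fun z => grid z m i j) curl0; rewrite /= Bqx_tr_grid // Bqy_tr_grid //.
move/(mulfI inv_mesh_neq0) => e.
by rewrite -[LHS]opprB -e opprB.
Qed.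

Lemma grad_potential u v : CC R n *m col_mx u v = 0 ->
  (BB R n)^T *m potential u v = c *: col_mx u v.
Proof.
move=> curl0; rewrite BB_tr_mul scale_col_mx; congr col_mx.
  apply: (grid_eq (erefl _)) => a j an jm.
  rewrite /grid entryN entryZ -!/(grid _ _ _ _) Bux_tr_grid // !potential_grid //; try lia.
  by rewrite big_ord_recr /=; ring.
apply: (grid_eq (mulnC _ _)) => i b im bn.
rewrite /grid entryN entryZ -!/(grid _ _ _ _) Bvy_tr_grid // !potential_grid //; try lia.
(* Summing the curl-free condition along a row, then telescoping in v. *)
have row_shift : \sum_(j < b) grid u m i.+1 j =
                 \sum_(j < b) grid u m i j + (grid v n i b - grid v n i 0).
  rewrite -(telescope_sumr (fun j => grid v n i j) (leq0n b)) big_mkord -big_split /=.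
  apply: eq_bigr => j _; have jb := ltn_ord j.
  by rewrite -(curl_free_grid curl0) //; [ring | lia].
by rewrite row_shift big_ord_recr /=; ring.
Qed.

Lemma curl_free_exact (x : 'cV[R]_(n * m + n * m)) :
  CC R n *m x = 0 -> exists phi, x = (BB R n)^T *m phi.
Proof.
rewrite -(vsubmxK x) => curl0.
exists (c^-1 *: potential (usubmx x) (dsubmx x)).
by rewrite -scalemxAr grad_potential // scalerA mulVf ?inv_mesh_neq0 // scale1r.
Qed.

End StaggeredGrid.

Theorem corollary2 (R : realFieldType) (n : nat) (hn : (2 <= n)%N) :
  AN R n \in unitmx /\
  SN R n = 1%:M - one_vec R n *m (one_vec R n)^T.
Proof.
case: n hn => [|m] // _.
exact: (schur_complement_projector (curl_grad R m) (@curl_free_exact R m)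
          (grad_one R m) (one_vec_unit R m) (@grad_ker R m)).
Qed.
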